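(* Let $\varkappa>0$ and $\beta\le 0$ be constants, let $g:\mathbb{R}\to\mathbb{R}$ be a sufficiently smooth function, and let $V_p(\xi_2)=-\left(\xi_2^2-\tfrac14\right)$. For $x_1\in\mathbb{R}$, $\xi_2\in\left[-\tfrac12,\tfrac12\right]$ and a function $f$ write $\langle f\rangle(x_1)=\int_{-1/2}^{1/2} f(x_1,\xi_2)\,d\xi_2$. Consider sequences of sufficiently smooth functions $\overline{c}_j(x_1)$ and $\widetilde{c}_j(x_1,\xi_2)$, $j=0,1,2,\dots$, with $c_j=\overline{c}_j+\widetilde{c}_j$, constructed as follows: $\widetilde{c}_0=\widetilde{c}_1=0$; for every $j\ge 0$, $\overline{c}_j$ solves $$-\varkappa\frac{\partial^2\overline{c}_j}{\partial x_1^2}+\langle V_p\rangle\frac{\partial\overline{c}_j}{\partial x_1}+\Big\langle V_p\frac{\partial\widetilde{c}_j}{\partial x_1}\Big\rangle+g(x_1)\,\delta_{j0}=2\beta\,\overline{c}_j+\beta\Big(\widetilde{c}_j\big(x_1,\tfrac12\big)+\widetilde{c}_j\big(x_1,-\tfrac12\big)\Big);$$ and for every $j\ge 2$, for each $x_1$, $\widetilde{c}_j(x_1,\cdot)$ is the solution of $$\varkappa\frac{\partial^2\widetilde{c}_j}{\partial\xi_2^2}=-\varkappa\frac{\partial^2 c_{j-2}}{\partial x_1^2}+V_p(\xi_2)\frac{\partial c_{j-2}}{\partial x_1}+g(x_1)\,\delta_{j2},\quad \xi_2\in\left(-\tfrac12,\tfrac12\right),$$ $$\pm\varkappa\frac{\partial\widetilde{c}_j}{\partial\xi_2}\Big|_{\xi_2=\pm\frac12}=\beta\,c_{j-2}\big(x_1,\pm\tfrac12\big),\qquad\langle\widetilde{c}_j\rangle=0.$$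 Then for every $j\ge0$, $\widetilde{c}_j(x_1,\xi_2)$ is, for each fixed $x_1$, a polynomial in $\xi_2$ of degree at most $2j$ (with coefficients depending on $x_1$).
   Context: This is the recursive construction of the terms of the asymptotic expansion $c^{(k)}_{\varepsilon r}(x_1,\xi_2)=\sum_{j=0}^k\varepsilon^j c_j(x_1,\xi_2)$, $\xi_2=x_2/\varepsilon$, for the convection–diffusion equation $-\operatorname{div}(\varkappa\nabla c)+V_p(x_2/\varepsilon)\,\partial c/\partial x_1=g(x_1)$ in the thin channel $\mathbb{R}\times(-\varepsilon/2,\varepsilon/2)$ with Robin condition $\varkappa\,\partial c/\partial n=\varepsilon\beta c$ on $x_2=\pm\varepsilon/2$. Here $\delta_{jm}$ is the Kronecker delta. The equation for $\overline{c}_j$ is the solvability (compatibility) condition ensuring the Neumann problem for $\widetilde{c}_{j+2}$ has a solution. *)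

From Stdlib Require Import Reals.
From Coquelicot Require Import Coquelicot.
Open Scope R_scope.

Definition pdx (f : R -> R -> R) : R -> R -> R :=
  fun x y => Derive (fun t => f t y) x.
Definition pdy (f : R -> R -> R) : R -> R -> R :=
  fun x y => Derive (fun t => f x t) y.

Definition mixed (k m : nat) (f : R -> R -> R) : R -> R -> R :=
  Nat.iter k pdx (Nat.iter m pdy f).

(* "Sufficiently smooth" in one variable: C^infinity. *)
Definition smooth1 (f : R -> R) : Prop :=
  forall (n : nat) (x : R), ex_derive_n f n x.

Definition smooth2 (f : R -> R -> R) : Prop :=
  forall (k m : nat) (x y : R),
    ex_derive (fun t => mixed k m f t y) x /\
    ex_derive (fun t => mixed k m f x t) y /\
    continuous (fun p : R * R => mixed k m f (fst p) (snd p)) (x, y).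

Definition Vp (xi : R) : R := - (xi ^ 2 - 1 / 4).

Definition avg (f : R -> R) : R := RInt f (-1/2) (1/2).

Definition kdelta (j m : nat) : R := if Nat.eqb j m then 1 else 0.

Definition cfull (cbar : nat -> R -> R) (ctil : nat -> R -> R -> R)
  (j : nat) : R -> R -> R := fun x y => cbar j x + ctil j x y.

(* The Neumann problem prescribes the second ξ-derivative of c̃_(j+2) as a
   polynomial in ξ built from c_j = c̄_j + c̃_j: differentiation in x₁ keeps the
   ξ-degree and multiplication by V_p raises it by 2, so it has degree 2j+2, and
   integrating twice in ξ gives degree 2j+4.  The induction only needs the
   coefficients to stay smooth in x₁, so that they can be differentiated again. *)
From Stdlib Require Import Reals Lra Lia.
From Coquelicot Require Import Coquelicot.
Open Scope R_scope.

Lemma smooth1_const (c : R) : smooth1 (fun _ => c).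
Proof. intros n x. apply ex_derive_n_const. Qed.

Lemma smooth1_scal_l (r : R) (f : R -> R) : smooth1 f -> smooth1 (fun x => r * f x).
Proof. intros Hf n x. apply ex_derive_n_scal_l, Hf. Qed.

Lemma smooth1_scal_r (r : R) (f : R -> R) : smooth1 f -> smooth1 (fun x => f x * r).
Proof. intros Hf n x. apply ex_derive_n_scal_r, Hf. Qed.

Lemma smooth1_plus (f g : R -> R) :
  smooth1 f -> smooth1 g -> smooth1 (fun x => f x + g x).
Proof.
  intros Hf Hg n x. apply ex_derive_n_plus; apply filter_forall; auto.
Qed.

Lemma smooth1_Derive (f : R -> R) : smooth1 f -> smooth1 (Derive f).
Proof.
  intros Hf [|n] x; [exact I|].
  apply ex_derive_ext with (Derive_n f (S n)).
  - intros t. replace (S n) with (n + 1)%nat by lia.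
    now rewrite <- (Derive_n_comp f n 1).
  - apply (Hf (S (S n)) x).
Qed.

Lemma Derive_n_iter_pdx (F : R -> R -> R) (y : R) (n : nat) (x : R) :
  Derive_n (fun t => F t y) n x = Nat.iter n pdx F x y.
Proof.
  revert x; induction n as [|n IHn]; intros x; [reflexivity|].
  apply Derive_ext. intros t. apply IHn.
Qed.

Lemma smooth2_iter_pdy_smooth1 (m : nat) (F : R -> R -> R) (y : R) :
  smooth2 F -> smooth1 (fun x => Nat.iter m pdy F x y).
Proof.
  intros HF [|n] x; [exact I|].
  apply ex_derive_ext with (fun t => mixed n m F t y).
  - intros t. symmetry. apply Derive_n_iter_pdx.
  - apply (HF n m x y).
Qed.

Lemma is_derive_sum_f_R0 (f : nat -> R -> R) (d : nat -> R) (n : nat) (x : R) :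
  (forall k, is_derive (f k) x (d k)) ->
  is_derive (fun t => sum_f_R0 (fun k => f k t) n) x (sum_f_R0 d n).
Proof.
  intros Hf. rewrite <- sum_n_Reals.
  apply is_derive_ext with (fun t => sum_n (fun k => f k t) n).
  - intros t. apply sum_n_Reals.
  - apply (is_derive_sum_n (V := R_NormedModule)). auto.
Qed.

Lemma is_derive_mul_const (f : R -> R) (x l c : R) :
  is_derive f x l -> is_derive (fun t => f t * c) x (l * c).
Proof.
  intros Hf. apply is_derive_ext with (fun t => c * f t).
  - intros t. apply Rmult_comm.
  - rewrite Rmult_comm. now apply is_derive_scal.
Qed.

Lemma is_derive_monomial_primitive (c : R) (k : nat) (t : R) :
  is_derive (fun s => c / INR (S k) * s ^ S k) t (c * t ^ k).
Proof.
  replace (c * t ^ k) with (c / INR (S k) * (INR (S k) * 1 * t ^ Nat.pred (S k))).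
  - apply is_derive_scal, is_derive_pow, (is_derive_id t).
  - simpl Nat.pred. field. apply not_0_INR. lia.
Qed.

Section PolynomialsInY.

Variables lo hi : R.

Lemma is_derive_zero_const (h dh : R -> R) (y0 : R) :
  (forall t, is_derive h t (dh t)) -> (forall t, lo < t < hi -> dh t = 0) ->
  lo <= y0 <= hi -> forall y, lo <= y <= hi -> h y = h y0.
Proof.
  intros Hh Hdh Hy0 y Hy.
  assert (Hlim : forall c, derivable_pt_lim h c (dh c))
    by (intros c; now apply is_derive_Reals).
  destruct (Rtotal_order y y0) as [Hlt | [-> | Hgt]]; [| reflexivity |].
  - destruct (MVT_cor2 h dh y y0 Hlt) as [c [Hc Hcy]]; [auto|].
    rewrite Hdh in Hc by lra. lra.
  - destruct (MVT_cor2 h dh y0 y Hgt) as [c [Hc Hcy]]; [auto|].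
    rewrite Hdh in Hc by lra. lra.
Qed.

Definition poly_in_y (n : nat) (F : R -> R -> R) : Prop :=
  exists a : nat -> R -> R, (forall k, smooth1 (a k)) /\
    forall x y, lo <= y <= hi -> F x y = sum_f_R0 (fun k => a k x * y ^ k) n.

Lemma poly_in_y_ext (n : nat) (F G : R -> R -> R) :
  (forall x y, lo <= y <= hi -> F x y = G x y) -> poly_in_y n F -> poly_in_y n G.
Proof.
  intros EFG [a [Ha HF]]. exists a. split; [exact Ha|].
  intros x y Hy. rewrite <- EFG by exact Hy. auto.
Qed.

Lemma poly_in_y_const (n : nat) (c : R -> R) : smooth1 c -> poly_in_y n (fun x _ => c x).
Proof.
  intros Hc. exists (fun k => if Nat.eqb k 0 then c else fun _ => 0). split.
  - intros [|k]; [exact Hc | exact (smooth1_const 0)].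
  - intros x y _. induction n as [|n IHn]; [simpl; ring|].
    rewrite tech5, <- IHn. simpl. ring.
Qed.

Lemma poly_in_y_plus (n : nat) (F G : R -> R -> R) :
  poly_in_y n F -> poly_in_y n G -> poly_in_y n (fun x y => F x y + G x y).
Proof.
  intros [a [Ha HF]] [b [Hb HG]]. exists (fun k x => a k x + b k x). split.
  - intros k. now apply smooth1_plus.
  - intros x y Hy. rewrite HF, HG, <- plus_sum by exact Hy.
    apply sum_eq. intros k _. ring.
Qed.

Lemma poly_in_y_scal (n : nat) (r : R) (F : R -> R -> R) :
  poly_in_y n F -> poly_in_y n (fun x y => r * F x y).
Proof.
  intros [a [Ha HF]]. exists (fun k x => r * a k x). split.
  - intros k. now apply smooth1_scal_l.
  - intros x y Hy. rewrite HF, scal_sum by exact Hy.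
    apply sum_eq. intros k _. ring.
Qed.

Lemma poly_in_y_S (n : nat) (F : R -> R -> R) : poly_in_y n F -> poly_in_y (S n) F.
Proof.
  intros [a [Ha HF]]. exists (fun k => if Nat.leb k n then a k else fun _ => 0). split.
  - intros k. destruct (Nat.leb k n); [apply Ha | apply smooth1_const].
  - intros x y Hy. rewrite HF, tech5 by exact Hy.
    replace (Nat.leb (S n) n) with false by (symmetry; apply Nat.leb_gt; lia).
    rewrite Rmult_0_l, Rplus_0_r. apply sum_eq. intros k Hk.
    now replace (Nat.leb k n) with true by (symmetry; apply Nat.leb_le; lia).
Qed.

Lemma poly_in_y_le (n m : nat) (F : R -> R -> R) :
  (n <= m)%nat -> poly_in_y n F -> poly_in_y m F.
Proof. induction 1; auto using poly_in_y_S. Qed.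

Lemma poly_in_y_mul_y (n : nat) (F : R -> R -> R) :
  poly_in_y n F -> poly_in_y (S n) (fun x y => y * F x y).
Proof.
  intros [a [Ha HF]].
  exists (fun k => match k with O => fun _ => 0 | S k => a k end). split.
  - intros [|k]; [apply smooth1_const | apply Ha].
  - intros x y Hy. rewrite HF by exact Hy. rewrite scal_sum, (decomp_sum _ (S n)) by lia.
    simpl. rewrite Rmult_0_l, Rplus_0_l.
    apply sum_eq. intros k _. ring.
Qed.

Lemma poly_in_y_Vp (n : nat) (F : R -> R -> R) :
  poly_in_y n F -> poly_in_y (S (S n)) (fun x y => Vp y * F x y).
Proof.
  intros HF.
  apply poly_in_y_ext with (fun x y => 1 / 4 * F x y + -1 * (y * (y * F x y))).
  - intros x y _. unfold Vp. ring.
  - apply poly_in_y_plus.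
    + apply poly_in_y_le with n; [lia|]. now apply poly_in_y_scal.
    + now apply poly_in_y_scal, poly_in_y_mul_y, poly_in_y_mul_y.
Qed.

Lemma poly_in_y_pdx (n : nat) (F : R -> R -> R) : poly_in_y n F -> poly_in_y n (pdx F).
Proof.
  intros [a [Ha HF]]. exists (fun k => Derive (a k)). split.
  - intros k. now apply smooth1_Derive.
  - intros x y Hy. unfold pdx.
    rewrite (Derive_ext _ (fun t => sum_f_R0 (fun k => a k t * y ^ k) n))
      by (intros t; now apply HF).
    apply is_derive_unique, is_derive_sum_f_R0. intros k.
    apply is_derive_mul_const, Derive_correct, (Ha k 1%nat).
Qed.

Hypothesis zero_in_interval : lo <= 0 <= hi.

Lemma poly_in_y_primitive (n : nat) (H Q : R -> R -> R) :
  smooth1 (fun x => H x 0) -> (forall x y, ex_derive (H x) y) ->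
  (forall x y, lo < y < hi -> pdy H x y = Q x y) ->
  poly_in_y n Q -> poly_in_y (S n) H.
Proof.
  intros HH0 HHy HQ [q [Hq Qq]].
  exists (fun k => match k with O => fun x => H x 0 | S k => fun x => q k x / INR (S k) end).
  split.
  { intros [|k]; [exact HH0 | apply smooth1_scal_r, Hq]. }
  intros x y Hy.
  set (P := fun t => sum_f_R0 (fun k => q k x / INR (S k) * t ^ S k) n).
  assert (HP0 : P 0 = 0).
  { apply sum_eq_R0. intros k _. simpl. ring. }
  assert (HHP : H x y - P y = H x 0 - P 0).
  { apply (is_derive_zero_const (fun t => H x t - P t)
      (fun t => pdy H x t - sum_f_R0 (fun k => q k x * t ^ k) n) 0); auto.
    - intros t. apply (is_derive_minus (fun t => H x t) P).
      + apply Derive_correct, HHy.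
      + apply is_derive_sum_f_R0. intros k. apply is_derive_monomial_primitive.
    - intros t Ht. rewrite HQ, Qq by lra. ring. }
  rewrite (decomp_sum _ (S n)) by lia. change (H x y = H x 0 * 1 + P y). lra.
Qed.

Lemma poly_in_y_second_primitive (n : nat) (H Q : R -> R -> R) :
  smooth2 H -> (forall x y, lo < y < hi -> pdy (pdy H) x y = Q x y) ->
  poly_in_y n Q -> poly_in_y (S (S n)) H.
Proof.
  intros HH HQ Qn.
  apply poly_in_y_primitive with (pdy H).
  - apply (smooth2_iter_pdy_smooth1 0 H 0 HH).
  - intros x y. apply (HH 0%nat 0%nat x y).
  - reflexivity.
  - apply poly_in_y_primitive with Q; auto.
    + apply (smooth2_iter_pdy_smooth1 1 H 0 HH).
    + intros x y. apply (HH 0%nat 1%nat x y).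
Qed.

Lemma poly_in_y_source (n : nat) (kappa d : R) (g : R -> R) (c : R -> R -> R) :
  smooth1 g -> poly_in_y n c ->
  poly_in_y (S (S n))
    (fun x y => - kappa * pdx (pdx c) x y + Vp y * pdx c x y + g x * d).
Proof.
  intros Hg Hc. repeat apply poly_in_y_plus.
  - apply poly_in_y_le with n; [lia|].
    now apply poly_in_y_scal, poly_in_y_pdx, poly_in_y_pdx.
  - now apply poly_in_y_Vp, poly_in_y_pdx.
  - apply (poly_in_y_const _ (fun x => g x * d)), smooth1_scal_r, Hg.
Qed.

End PolynomialsInY.

Theorem lemma1 (kappa beta : R) (g : R -> R)
  (cbar : nat -> R -> R) (ctil : nat -> R -> R -> R) :
  0 < kappa -> beta <= 0 ->
  smooth1 g ->
  (forall j, smooth1 (cbar j)) ->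
  (forall j, smooth2 (ctil j)) ->
  (forall x1 xi, ctil 0%nat x1 xi = 0) ->
  (forall x1 xi, ctil 1%nat x1 xi = 0) ->
  (* equation for cbar_j, every j >= 0 *)
  (forall (j : nat) (x1 : R),
     - kappa * Derive_n (cbar j) 2 x1 + avg Vp * Derive (cbar j) x1
     + avg (fun xi => Vp xi * pdx (ctil j) x1 xi) + g x1 * kdelta j 0
     = 2 * beta * cbar j x1 + beta * (ctil j x1 (1/2) + ctil j x1 (-1/2))) ->
  (* Neumann problem for ctil_j, every j >= 2 *)
  (forall (j : nat) (x1 xi : R), (2 <= j)%nat -> -1/2 < xi < 1/2 ->
     kappa * pdy (pdy (ctil j)) x1 xi
     = - kappa * pdx (pdx (cfull cbar ctil (j - 2))) x1 xi
       + Vp xi * pdx (cfull cbar ctil (j - 2)) x1 xi + g x1 * kdelta j 2) ->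
  (forall (j : nat) (x1 : R), (2 <= j)%nat ->
     kappa * pdy (ctil j) x1 (1/2) = beta * cfull cbar ctil (j - 2) x1 (1/2) /\
     - kappa * pdy (ctil j) x1 (-1/2) = beta * cfull cbar ctil (j - 2) x1 (-1/2)) ->
  (forall (j : nat) (x1 : R), (2 <= j)%nat -> avg (fun xi => ctil j x1 xi) = 0) ->
  forall (j : nat) (x1 : R), exists a : nat -> R,
    forall xi, -1/2 <= xi <= 1/2 ->
      ctil j x1 xi = sum_f_R0 (fun k => a k * xi ^ k) (2 * j).
Proof.
  intros Hkappa _ Hg Hcbar Hctil Hc0 Hc1 _ Hneumann _ _.
  pose (Poly := poly_in_y (-1/2) (1/2)).
  assert (Hdeg : forall j, Poly (2 * j)%nat (ctil j) /\ Poly (2 * S j)%nat (ctil (S j))).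
  { induction j as [|j [IHj IHSj]].
    - split; apply poly_in_y_ext with (fun _ _ => 0); auto using poly_in_y_const, smooth1_const.
    - split; [exact IHSj|].
      replace (2 * S (S j))%nat with (S (S (S (S (2 * j))))) by lia.
      apply poly_in_y_second_primitive with
        (fun x y => / kappa * (- kappa * pdx (pdx (cfull cbar ctil j)) x y
           + Vp y * pdx (cfull cbar ctil j) x y + g x * kdelta (S (S j)) 2)).
      + lra.
      + apply Hctil.
      + intros x y Hy.
        assert (Hj := Hneumann (S (S j)) x y ltac:(lia) Hy).
        replace (S (S j) - 2)%nat with j in Hj by lia.
        rewrite <- Hj. field. lra.
      + apply poly_in_y_scal, poly_in_y_source; [exact Hg|].
        apply (poly_in_y_plus _ _ _ (fun x _ => cbar j x)); [|exact IHj].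
        apply poly_in_y_const, Hcbar. }
  intros j x1. destruct (proj1 (Hdeg j)) as [a [_ Ha]].
  exists (fun k => a k x1). intros xi Hxi. now apply Ha.
Qed.
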